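(* Consider the store-and-forward packet routing problem on the uni-directional line with $n$ nodes, buffer size $B=0$ at every node and uniform link capacity $c\ge 1$. The nearest-to-go policy is an optimal policy: for every input sequence $\sigma$ of packet requests, the number of packets it delivers equals the maximum throughput achievable on $\sigma$.
   Context: Store-and-forward packet routing model on the uni-directional line $v_1\to v_2\to\cdots\to v_n$: each edge can carry at most $c$ packets per time step and traversing an edge takes one time step; since $B=0$, nodes cannot store packets. Each packet request $r_i=(a_i,b_i,t_i,d_i)$ has source $a_i$, destination $b_i$ equal to $a_i$ or a later node of the path, input time $t_i$ (the packet is input at $a_i$ at time $t_i$ via a local input; any number of packets may be input to a node in a step), and a deadline $d_i$ that is feasible, i.e. $d_i \ge t_i + \mathrm{dist}(a_i,b_i)$ (possibly $d_i=\infty$). In each time step, each node removes (delivers) the packets destined to it, forwards at most $c$ of the remaining present packets (those arriving along the incoming edge and those input locally) along its outgoing edge, and deletes the rest. Throughput = number of packets delivered by their deadline. The nearest-to-go policy: at each node and time step, among the present packets not destined to the node, forward the (at most) $c$ packets whose destinations are nearest to the node and delete the others. *)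

From mathcomp Require Import all_boot.
From mathcomp Require Import boolp.
Set Implicit Arguments. Unset Strict Implicit. Unset Printing Implicit Defensive.

(* Nodes of the line v_1 -> ... -> v_n are numbered 0, ..., n-1;
   the edge leaving node v goes to node v.+1. Times are natural numbers. *)

(* A packet request r = (a, b, t, d); deadline None means d = infinity. *)
Record request := Req { src : nat; dst : nat; tin : nat; dl : option nat }.

Definition req0 : request := Req 0 0 0 None.

Definition meets_deadline (tau : nat) (d : option nat) : Prop :=
  match d with None => True | Some d => tau <= d end.

Definition wf_request (n : nat) (r : request) : Prop :=
  src r <= dst r < n /\ meets_deadline (tin r + (dst r - src r)) (dl r).

Definition rq (s : seq request) (i : 'I_(size s)) : request := nth req0 s i.

(* A schedule: F v tau i = true iff node v forwards packet i along its
   outgoing edge at time step tau (it then arrives at v.+1 at time tau.+1). *)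
Definition schedule (s : seq request) := nat -> nat -> 'I_(size s) -> bool.

(* Packet i is present at node v at time tau: either it is input there
   (locally) at that time, or it was forwarded by node v-1 at time tau-1.
   (B = 0: nodes cannot store packets.) *)
Definition present (s : seq request) (F : schedule s) (i : 'I_(size s))
    (v tau : nat) : bool :=
  ((src (rq i) == v) && (tin (rq i) == tau))
  || [&& 0 < v, 0 < tau & F v.-1 tau.-1 i].

(* Admissible behaviour: a node only forwards packets present at it and not
   destined to it, along an existing edge, and at most c per edge per step;
   all other present packets are delivered (if destined here) or deleted. *)
Definition valid_schedule (n c : nat) (s : seq request) (F : schedule s) : Prop :=
  (forall v tau (i : 'I_(size s)), F v tau i ->
      [&& present F i v tau, dst (rq i) != v & v.+1 < n])
  /\ (forall v tau, #|[pred i | F v tau i]| <= c).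

Definition delivered (s : seq request) (F : schedule s) (i : 'I_(size s)) : Prop :=
  exists tau, present F i (dst (rq i)) tau /\ meets_deadline tau (dl (rq i)).

Definition throughput (s : seq request) (F : schedule s) : nat :=
  #|[pred i | `[< delivered F i >]]|.

Definition nearest_to_go (n c : nat) (s : seq request) (F : schedule s) : Prop :=
  valid_schedule n c F /\
  forall v tau,
    let P := [pred i | present F i v tau && (dst (rq i) != v)] in
    #|[pred i | F v tau i]| = minn c #|P| /\
    (forall i j, F v tau i -> P j -> ~~ F v tau j -> dst (rq i) <= dst (rq j)).

From mathcomp Require Import all_boot.
From mathcomp Require Import boolp.
From mathcomp Require Import zify.
Set Implicit Arguments. Unset Strict Implicit. Unset Printing Implicit Defensive.

(* Since B = 0 a packet never waits: packet i is only ever present at nodes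
   v with tau - v = tin i - src i, and it is delivered iff it is present at
   its destination at time tin i + dist, which meets any feasible deadline.
   The line therefore splits into independent "diagonals", and on a diagonal
   the routing problem is static: node v receives the packets forwarded by
   node v - 1 plus its own inputs, delivers those destined to it and may pass
   c of the rest on.  Let the potential Phi(v, x) be the number of packets of
   the diagonal delivered at nodes <= v plus the number forwarded by v with
   destination <= x.  For x >= v, flow conservation expresses Phi(v, x)
   through Phi(v - 1, .) and the inputs at v; since nearest-to-go forwards
   min(c, #pending with destination <= x) such packets, its Phi dominates
   that of any valid schedule, by induction along the diagonal.  Summing
   Phi(n, n) over all diagonals gives the throughput. *)

Lemma card_and_split (T : finType) (P Q : pred T) :
  #|P| = #|[pred i | P i && Q i]| + #|[pred i | P i && ~~ Q i]|.
Proof. by rewrite -(cardID Q P); congr (_ + _); apply: eq_card => i; rewrite !inE andbC. Qed.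

Lemma card_fibers (T : finType) (P : pred T) (f : T -> nat) m :
  (forall i, P i -> f i < m) ->
  #|P| = \sum_(k < m) #|[pred i | P i && (f i == k)]|.
Proof.
move=> fP; rewrite -sum1_card big_mkcond /=.
under [RHS]eq_bigr => k _ do rewrite -sum1_card big_mkcond /=.
rewrite exchange_big /=; apply: eq_bigr => i _; rewrite [i \in P]unfold_in.
case: (boolP (P i)) => Pi; last by rewrite big1 // => k _; rewrite inE (negbTE Pi).
rewrite (bigD1 (Ordinal (fP i Pi))) //= inE Pi eqxx big1 // => k.
by rewrite inE Pi -val_eqE /= eq_sym => /negbTE ->.
Qed.

Section Line.

Variables (n c : nat) (s : seq request).
Hypothesis wf : forall i : 'I_(size s), wf_request n (rq i).

Definition reaches_dst (H : schedule s) i :=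
  present H i (dst (rq i)) (tin (rq i) + (dst (rq i) - src (rq i))).

Definition on_diagonal v tau (i : 'I_(size s)) := tau + src (rq i) == tin (rq i) + v.

Definition delivered_upto (H : schedule s) v tau :=
  #|[pred i | reaches_dst H i && (dst (rq i) <= v) && on_diagonal v tau i]|.

Definition forwarded_le (H : schedule s) v tau x :=
  #|[pred i | H v tau i && (dst (rq i) <= x)]|.

Definition pending_le (H : schedule s) v tau x :=
  #|[pred i | present H i v tau && (dst (rq i) != v) && (dst (rq i) <= x)]|.

Definition input_le v tau x :=
  #|[pred i : 'I_(size s) |
     (src (rq i) == v) && (tin (rq i) == tau) && (dst (rq i) <= x)]|.

Definition potential (H : schedule s) v tau x :=
  delivered_upto H v tau + forwarded_le H v tau x.

Definition upstream (H : schedule s) v tau x :=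
  if (0 < v) && (0 < tau) then potential H v.-1 tau.-1 x else 0.

Section ValidSchedule.

Variable H : schedule s.
Hypothesis VH : valid_schedule n c H.

Lemma present_diagonal v tau i : present H i v tau ->
  [/\ src (rq i) <= v, on_diagonal v tau i & v <= dst (rq i)].
Proof.
have [/andP [sd dn] _] := wf i; rewrite /on_diagonal.
elim: v tau => [|v IH] tau; rewrite /present /=.
  by rewrite orbF => /andP [/eqP e1 /eqP e2]; split=> //; apply/eqP; lia.
case/orP => [/andP [/eqP e1 /eqP e2]|]; first by split=> //; apply/eqP; lia.
case: tau => [//|tau] /= /VH.1 /and3P [pr ne _].
by have [h1 /eqP h2 h3] := IH _ pr; split=> //; [lia | apply/eqP; lia | lia].
Qed.

Lemma reaches_dst_at v tau i : dst (rq i) = v ->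
  reaches_dst H i && on_diagonal v tau i = present H i v tau.
Proof.
move=> dv; have [/andP [sd dn] _] := wf i.
apply/idP/idP => [/andP [re /eqP diag]|pr].
  by move: re; rewrite /reaches_dst dv; have -> : tin (rq i) + (v - src (rq i)) = tau by lia.
have [sv /[dup] /eqP diag -> _] := present_diagonal pr.
rewrite andbT /reaches_dst dv.
by have -> : tin (rq i) + (v - src (rq i)) = tau by lia.
Qed.

Lemma delivered_upto_rec v tau :
  delivered_upto H v tau =
  (if (0 < v) && (0 < tau) then delivered_upto H v.-1 tau.-1 else 0)
  + #|[pred i | present H i v tau && (dst (rq i) == v)]|.
Proof.
rewrite /delivered_upto (card_and_split _ (fun i => dst (rq i) == v)) addnC.
congr (_ + _); last first.
  apply: eq_card => i; rewrite !inE /=.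
  case: eqP => [dv|_]; rewrite ?andbF // !andbT dv leqnn andbT.
  exact: reaches_dst_at.
case: v => [|v]; case: tau => [|tau] /=;
  [apply: eq_card0 | apply: eq_card0 | apply: eq_card0 | apply: eq_card] => i;
  rewrite !inE /on_diagonal; have [/andP [sd dn] _] := wf i;
  case: (reaches_dst H i) => //=; lia.
Qed.

Lemma present_le_by_dst v tau x : v <= x ->
  #|[pred i | present H i v tau && (dst (rq i) <= x)]| =
  #|[pred i | present H i v tau && (dst (rq i) == v)]| + pending_le H v tau x.
Proof.
move=> vx; rewrite (card_and_split _ (fun i => dst (rq i) == v)).
congr (_ + _); apply: eq_card => i; rewrite !inE /= -!andbA.
  by case: eqP => [->|]; rewrite ?vx ?andbF.
by rewrite [(_ <= x) && _]andbC.
Qed.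

Lemma forwarded_src_lt v tau i : H v tau i -> src (rq i) < v.+1.
Proof. by case/VH.1/and3P => /present_diagonal []. Qed.

Lemma present_le_by_origin v tau x :
  #|[pred i | present H i v tau && (dst (rq i) <= x)]| =
  input_le v tau x +
  (if (0 < v) && (0 < tau) then forwarded_le H v.-1 tau.-1 x else 0).
Proof.
rewrite (card_and_split _ (fun i => (src (rq i) == v) && (tin (rq i) == tau))).
congr (_ + _).
  apply: eq_card => i; rewrite !inE /present.
  by case: (src _ == v); case: (tin _ == tau); rewrite /= ?andbF ?andbT.
case: ifP => [/andP [v0 t0]|v0]; [apply: eq_card | apply: eq_card0] => i;
  rewrite !inE /present; last first.
  move: v0; case: (0 < v); case: (0 < tau) => //= _;
  by case: (src _ == v); case: (tin _ == tau); rewrite /= ?andbF.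
rewrite v0 t0 /=; case: (boolP (H v.-1 tau.-1 i)) => Fi; last first.
  by case: (src _ == v); case: (tin _ == tau); rewrite /= ?andbF ?andbT.
have := forwarded_src_lt Fi; rewrite prednK // => sv.
by rewrite eq_sym (gtn_eqF sv) orbT /= andbT.
Qed.

Lemma flow_balance v tau x : v <= x ->
  delivered_upto H v tau + pending_le H v tau x =
  upstream H v tau x + input_le v tau x.
Proof.
move=> vx; have := present_le_by_origin v tau x.
rewrite (present_le_by_dst _ vx) delivered_upto_rec /upstream /potential.
by case: ifP => _; lia.
Qed.

Lemma forwarded_le_pending v tau x : forwarded_le H v tau x <= pending_le H v tau x.
Proof.
apply: subset_leq_card; apply/subsetP => i; rewrite !inE /=.
by case/andP => /VH.1/and3P [-> -> _] ->.
Qed.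

Lemma forwarded_le_cap v tau x : forwarded_le H v tau x <= c.
Proof.
apply: leq_trans (VH.2 v tau); apply: subset_leq_card; apply/subsetP => i.
by rewrite !inE /= => /andP [].
Qed.

Lemma pending_le_self v tau : pending_le H v tau v = 0.
Proof.
apply: eq_card0 => i; rewrite !inE /=; apply/negP => /andP [/andP [pr ne] le].
by have [_ _ vd] := present_diagonal pr; lia.
Qed.

Lemma delivered_reaches_dst i : delivered H i <-> reaches_dst H i.
Proof.
split=> [[tau [pr _]] | re]; last first.
  by exists (tin (rq i) + (dst (rq i) - src (rq i))); split; last by have [] := wf i.
have [sd /eqP diag _] := present_diagonal pr.
by rewrite /reaches_dst; have -> : tin (rq i) + (dst (rq i) - src (rq i)) = tau by lia.
Qed.

Lemma throughput_delivered_upto :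
  throughput H = \sum_(tau < \max_(i : 'I_(size s)) tin (rq i) + n.+1)
                   delivered_upto H n tau.
Proof.
have -> : throughput H = #|[pred i | reaches_dst H i]|.
  by apply: eq_card => i; rewrite !inE; apply/asboolP/idP => /delivered_reaches_dst.
rewrite (@card_fibers _ _ (fun i => tin (rq i) + n - src (rq i))
  (\max_(i : 'I_(size s)) tin (rq i) + n.+1)) => [|i _].
  apply: eq_bigr => tau _; apply: eq_card => i; rewrite !inE /on_diagonal.
  by have [/andP [sd dn] _] := wf i; case: (reaches_dst H i) => //=; lia.
have : tin (rq i) <= \max_(j : 'I_(size s)) tin (rq j) by apply: leq_bigmax.
lia.
Qed.

End ValidSchedule.

Lemma ntg_forwarded_le F : nearest_to_go n c F ->
  forall v tau x, forwarded_le F v tau x = minn c (pending_le F v tau x).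
Proof.
move=> [VF ntg] v tau x; have [card_fw nearest] := ntg v tau.
have fw_pend := forwarded_le_pending VF v tau x.
have fw_cap := forwarded_le_cap VF v tau x.
case: (pickP [pred j | present F j v tau && (dst (rq j) != v)
                       && (dst (rq j) <= x) && ~~ F v tau j]) => [j | all_fw].
  rewrite !inE /= => /andP [/andP [/andP [pj nj] xj] Fj].
  have fw_all : forwarded_le F v tau x = #|[pred i | F v tau i]|.
    apply: eq_card => i; rewrite !inE /=; case: (boolP (F v tau i)) => //= Fi.
    by have := nearest i j Fi; rewrite !inE pj nj => /(_ isT Fj); lia.
  have : #|[pred i | F v tau i]| <
         #|[pred i | present F i v tau && (dst (rq i) != v)]|.
    apply: proper_card; apply/properP; split; last by exists j; rewrite !inE ?pj ?nj.
    by apply/subsetP => i; rewrite !inE => /VF.1/and3P [-> -> _].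
  lia.
have fw_eq : forwarded_le F v tau x = pending_le F v tau x.
  apply: eq_card => i; rewrite !inE /=; apply/idP/idP.
    by case/andP => /VF.1/and3P [-> -> _] ->.
  move=> pend_i; have := all_fw i; rewrite !inE /= pend_i /= => /negbFE ->.
  by case/andP: pend_i.
lia.
Qed.

Section Domination.

Variables F G : schedule s.
Hypotheses (NF : nearest_to_go n c F) (VG : valid_schedule n c G).

Lemma potential_step v tau x : v <= x ->
  (forall y, v <= y -> upstream G v tau y <= upstream F v tau y) ->
  potential G v tau x <= potential F v tau x.
Proof.
move=> vx up_le; have VF := NF.1.
have := flow_balance VF tau vx; have := flow_balance VG tau vx.
have := flow_balance VF tau (leqnn v); have := flow_balance VG tau (leqnn v).
rewrite !pending_le_self // /potential (ntg_forwarded_le NF).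
have := up_le _ vx; have := up_le _ (leqnn v).
have := forwarded_le_pending VG v tau x; have := forwarded_le_cap VG v tau x.
lia.
Qed.

Lemma ntg_potential_ge v tau x : v <= x ->
  potential G v tau x <= potential F v tau x.
Proof.
elim: v tau x => [|v IH] tau x vx; apply: potential_step => // y vy.
by case: tau => [|tau] //=; apply: IH; lia.
Qed.

Lemma ntg_delivered_upto_ge v tau :
  delivered_upto G v tau <= delivered_upto F v tau.
Proof.
have := ntg_potential_ge tau (leqnn v); rewrite /potential.
have := forwarded_le_pending NF.1 v tau v; have := forwarded_le_pending VG v tau v.
by rewrite (pending_le_self NF.1) (pending_le_self VG) !leqn0 => /eqP -> /eqP ->;
  rewrite !addn0.
Qed.

End Domination.
End Line.

Theorem mainTheorem4 (n c : nat) (s : seq request) :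
  1 <= c ->
  (forall i : 'I_(size s), wf_request n (rq i)) ->
  forall F : schedule s, nearest_to_go n c F ->
  forall G : schedule s, valid_schedule n c G ->
  throughput G <= throughput F.
Proof.
move=> _ wf F NF G VG.
rewrite (throughput_delivered_upto wf VG) (throughput_delivered_upto wf NF.1).
apply: leq_sum => tau _; exact: (ntg_delivered_upto_ge wf NF VG).
Qed.
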